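(* There is a function $\varepsilon\colon\mathbb{N}\to\mathbb{R}$ with $\varepsilon(n)\to0$ as $n\to\infty$ such that for every positive integer $n$ and every function $f\colon\{0,1\}^n\to\mathbb{R}$ with a unique global minimum, the expected optimization time of the (1+1)~EA minimizing $f$ is at least $(1-\varepsilon(n))\,\mathrm{e}\, n\ln(n)$.
   Context: The (1+1)~EA minimizing $f\colon\{0,1\}^n\to\mathbb{R}$: choose $x^{(0)}\in\{0,1\}^n$ uniformly at random; for $t=0,1,2,\dots$, sample $y^{(t)}$ by flipping each bit of $x^{(t)}$ independently with probability $1/n$; set $x^{(t+1)}:=y^{(t)}$ if $f(y^{(t)})\le f(x^{(t)})$ and $x^{(t+1)}:=x^{(t)}$ otherwise. The optimization time is the random variable $T_f=\min\{t\in\mathbb{N}: f(x^{(t)})=\min_{z\in\{0,1\}^n}f(z)\}$. *)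

From Stdlib Require Import Reals List Bool.
Open Scope R_scope.

Fixpoint bits (n : nat) : list (list bool) :=
  match n with
  | O => nil :: nil
  | S m => map (cons false) (bits m) ++ map (cons true) (bits m)
  end.

Definition sumB (n : nat) (g : list bool -> R) : R :=
  fold_right (fun x s => g x + s) 0 (bits n).

(* probability that standard bit mutation (rate 1/n) turns x into y *)
Definition mut (n : nat) (x y : list bool) : R :=
  fold_right Rmult 1
    (map (fun p => if Bool.eqb (fst p) (snd p) then 1 - / INR n else / INR n)
         (combine x y)).

Definition fmin (n : nat) (f : list bool -> R) : R :=
  fold_right (fun z m => Rmin (f z) m) (f (repeat false n)) (bits n).

Definition notopt (n : nat) (f : list bool -> R) (x : list bool) : R :=
  if Req_EM_T (f x) (fmin n f) then 0 else 1.

Definition unique_min (n : nat) (f : list bool -> R) : Prop :=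
  exists xs, In xs (bits n) /\
    forall z, In z (bits n) -> z <> xs -> f xs < f z.

(* q n f t y = P(x^(t) = y and f(x^(s)) <> min f for all s <= t)
   for the (1+1) EA minimizing f (uniform initialization, mutation rate 1/n,
   accept y iff f y <= f x). *)
Fixpoint qEA (n : nat) (f : list bool -> R) (t : nat) (y : list bool) : R :=
  match t with
  | O => notopt n f y / 2 ^ n
  | S t' =>
      notopt n f y *
      (sumB n (fun x => qEA n f t' x *
                        (if Rle_dec (f y) (f x) then mut n x y else 0))
       + qEA n f t' y *
         sumB n (fun z => if Rle_dec (f z) (f y) then 0 else mut n y z))
  end.

Definition tailEA (n : nat) (f : list bool -> R) (t : nat) : R :=
  sumB n (qEA n f t).

(* E[T_f] = sum_{t>=0} P(T_f > t); "E[T_f] >= b" (possibly E[T_f] = +infinity)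
   is expressed as: every r < b is exceeded by some partial sum. *)
Definition expected_time_ge (n : nat) (f : list bool -> R) (b : R) : Prop :=
  forall r, r < b -> exists N, r < sum_f_R0 (tailEA n f) N.

(* Let xs be the unique optimum, d(y) the Hamming distance from y to xs, and take
   m ~ n / log n. The potential H_(min(d(y), m)), with H the harmonic numbers, vanishes
   only at xs. The EA is elitist, so the potential of the current point only decreases
   when an accepted offspring has smaller potential; splitting the bits into those that
   differ from xs and flip, differ and stay, and agree and flip, the expected loss in one
   step is at most delta = p/(1-p) ((1-p)^(n-m) + 2 (m+1) p) with p = 1/n, which is
   (1 + O(1/log n)) / (e n). The initial distance is Binomial(n, 1/2), so by Chebyshev the
   initial potential has expectation at least H_m (1 - 4/n) = (1 - O(log log n / log n)) ln n.
   Summing the drift over time, E[T] >= H_m (1 - 4/n) / delta, which is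
   (1 - O((log n)^(-1/2))) e n ln n. *)

From Stdlib Require Import Reals List Lra Lia Bool Arith.
Open Scope R_scope.

(** * Sums over bit strings *)

Definition sumL (l : list (list bool)) (g : list bool -> R) : R :=
  fold_right (fun x s => g x + s) 0 l.

Lemma sumL_app l1 l2 g : sumL (l1 ++ l2) g = sumL l1 g + sumL l2 g.
Proof. induction l1 as [|a l1 IH]; simpl; [lra|]. unfold sumL in *; simpl; rewrite IH; lra. Qed.

Lemma sumL_map (h : list bool -> list bool) l g :
  sumL (map h l) g = sumL l (fun y => g (h y)).
Proof. induction l as [|a l IH]; simpl; auto. unfold sumL in *; simpl; rewrite IH; lra. Qed.

Lemma sumL_add l g1 g2 : sumL l (fun y => g1 y + g2 y) = sumL l g1 + sumL l g2.
Proof. induction l as [|a l IH]; unfold sumL in *; cbn; [lra|]. rewrite IH; lra. Qed.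

Lemma sumL_scal_l l c g : sumL l (fun y => c * g y) = c * sumL l g.
Proof. induction l as [|a l IH]; unfold sumL in *; cbn; [lra|]. rewrite IH; lra. Qed.

Lemma sumL_ext l g1 g2 : (forall y, In y l -> g1 y = g2 y) -> sumL l g1 = sumL l g2.
Proof.
  induction l as [|a l IH]; intros H; unfold sumL in *; cbn; auto.
  rewrite (H a (or_introl eq_refl)), IH; [reflexivity|].
  intros; apply H; right; auto.
Qed.

Lemma sumL_scal_r l c g : sumL l (fun y => g y * c) = sumL l g * c.
Proof. rewrite (sumL_ext _ _ (fun y => c * g y)) by (intros; ring). rewrite sumL_scal_l; ring. Qed.

Lemma sumL_le l g1 g2 : (forall y, In y l -> g1 y <= g2 y) -> sumL l g1 <= sumL l g2.
Proof.
  induction l as [|a l IH]; intros H; cbn; [lra|].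
  apply Rplus_le_compat; [apply H; left; auto | apply IH; intros; apply H; right; auto].
Qed.

Lemma sumL_nonneg l g : (forall y, In y l -> 0 <= g y) -> 0 <= sumL l g.
Proof.
  intros H. apply Rle_trans with (sumL l (fun _ => 0)); [|now apply sumL_le].
  clear H; unfold sumL; induction l; simpl; lra.
Qed.

Lemma sumL_comm l1 l2 (h : list bool -> list bool -> R) :
  sumL l1 (fun x => sumL l2 (h x)) = sumL l2 (fun y => sumL l1 (fun x => h x y)).
Proof.
  induction l1 as [|a l1 IH].
  - unfold sumL; simpl; induction l2; simpl; lra.
  - change (sumL l2 (h a) + sumL l1 (fun x => sumL l2 (h x)) =
            sumL l2 (fun y => h a y + sumL l1 (fun x => h x y))).
    rewrite IH, sumL_add. reflexivity.
Qed.

Lemma sumB_sumL n g : sumB n g = sumL (bits n) g.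
Proof. reflexivity. Qed.

Lemma sumB_S k g :
  sumB (S k) g = sumB k (fun y => g (false :: y)) + sumB k (fun y => g (true :: y)).
Proof. exact (eq_trans (sumL_app _ _ g) (f_equal2 Rplus (sumL_map _ _ g) (sumL_map _ _ g))). Qed.

Lemma bits_length k y : In y (bits k) -> length y = k.
Proof.
  revert y; induction k as [|k IH]; cbn; intros y H.
  - now destruct H as [<-|[]].
  - apply in_app_or in H as [H|H]; apply in_map_iff in H as [z [<- Hz]]; cbn; f_equal; auto.
Qed.

(** * Standard bit mutation *)

(* [mut n] is [mutp (/ INR n)]; rate [1/2] gives the uniform distribution. *)
Definition mutp (p : R) (x y : list bool) : R :=
  fold_right Rmult 1
    (map (fun pr => if Bool.eqb (fst pr) (snd pr) then 1 - p else p) (combine x y)).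

Lemma mutp_cons p a x c y :
  mutp p (a :: x) (c :: y) = (if Bool.eqb a c then 1 - p else p) * mutp p x y.
Proof. reflexivity. Qed.

Lemma mutp_nonneg p x y : 0 <= p <= 1 -> 0 <= mutp p x y.
Proof.
  intros Hp; revert y; induction x as [|a x IH]; intros [|c y]; unfold mutp; simpl; try lra.
  apply Rmult_le_pos; [destruct (Bool.eqb a c); lra | apply IH].
Qed.

Lemma mutp_half x y : length x = length y -> mutp (/ 2) x y = (/ 2) ^ length x.
Proof.
  revert y; induction x as [|a x IH]; intros [|c y] H; simpl in *; try discriminate; auto.
  rewrite mutp_cons, IH by auto. destruct (Bool.eqb a c); field.
Qed.

Fixpoint hdist (y o : list bool) : nat :=
  match y, o with
  | a :: y', b :: o' => ((if Bool.eqb a b then 0 else 1) + hdist y' o')%nat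
  | _, _ => 0%nat
  end.

Fixpoint agree (y o : list bool) : nat :=
  match y, o with
  | a :: y', b :: o' => ((if Bool.eqb a b then 1 else 0) + agree y' o')%nat
  | _, _ => 0%nat
  end.

Lemma hdist_refl x : hdist x x = 0%nat.
Proof. induction x as [|a x IH]; simpl; auto. now rewrite eqb_reflx, IH. Qed.

Lemma agree_add_hdist x o :
  length x = length o -> (agree x o + hdist x o)%nat = length x.
Proof.
  revert o; induction x as [|a x IH]; intros [|b o] H; simpl in *; try discriminate; auto.
  injection H as H. specialize (IH o H). destruct (Bool.eqb a b); lia.
Qed.

(* [mut_expect p x o phi] is the expectation of [phi w u r] when [x] is mutated
   with rate [p], where [w], [u], [r] count the positions at which [x] differs from
   [o] and is flipped, differs from [o] and is kept, agrees with [o] and is flipped. *)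
Fixpoint mut_expect (p : R) (x o : list bool) (phi : nat -> nat -> nat -> R) : R :=
  match x, o with
  | a :: x', b :: o' =>
      if Bool.eqb a b then
        (1 - p) * mut_expect p x' o' phi
        + p * mut_expect p x' o' (fun w u r => phi w u (S r))
      else
        (1 - p) * mut_expect p x' o' (fun w u r => phi w (S u) r)
        + p * mut_expect p x' o' (fun w u r => phi (S w) u r)
  | _, _ => phi 0%nat 0%nat 0%nat
  end.

Lemma mut_expect_ext p x o phi1 phi2 :
  (forall w u r, phi1 w u r = phi2 w u r) -> mut_expect p x o phi1 = mut_expect p x o phi2.
Proof.
  revert o phi1 phi2; induction x as [|a x IH]; intros [|b o] phi1 phi2 H; simpl; auto.
  destruct (Bool.eqb a b); rewrite !(IH o _ _ ltac:(intros; apply H)); reflexivity.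
Qed.

Lemma mut_expect_lin p x o a b phi1 phi2 :
  mut_expect p x o (fun w u r => a * phi1 w u r + b * phi2 w u r)
  = a * mut_expect p x o phi1 + b * mut_expect p x o phi2.
Proof.
  revert o a b phi1 phi2; induction x as [|c x IH]; intros [|d o] a b phi1 phi2; simpl; auto.
  destruct (Bool.eqb c d); rewrite !IH; ring.
Qed.

Lemma mut_expect_const p x o c : mut_expect p x o (fun _ _ _ => c) = c.
Proof.
  revert o; induction x as [|a x IH]; intros [|b o]; simpl; auto.
  destruct (Bool.eqb a b); rewrite !IH; ring.
Qed.

(* Only the triples with [w + u = hdist x o] have positive probability. *)
Lemma mut_expect_mono p x o phi1 phi2 : 0 <= p <= 1 ->
  (forall w u r, (w + u)%nat = hdist x o -> phi1 w u r <= phi2 w u r) ->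
  mut_expect p x o phi1 <= mut_expect p x o phi2.
Proof.
  intros Hp; revert o phi1 phi2; induction x as [|a x IH]; intros [|b o] phi1 phi2 H;
    simpl in *; try (apply H; lia).
  destruct (Bool.eqb a b); apply Rplus_le_compat; apply Rmult_le_compat_l; try lra;
    apply IH; intros; apply H; lia.
Qed.

Lemma mut_expect_nonneg p x o phi : 0 <= p <= 1 ->
  (forall w u r, 0 <= phi w u r) -> 0 <= mut_expect p x o phi.
Proof. intros Hp H. rewrite <- (mut_expect_const p x o 0). now apply mut_expect_mono. Qed.

Lemma sum_mutp_hdist p k x o G : length x = k -> length o = k ->
  sumB k (fun y => mutp p x y * G (hdist y o)) = mut_expect p x o (fun w u r => G (u + r)%nat).
Proof.
  revert x o G; induction k as [|k IH]; intros x o G Hx Ho.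
  - destruct x, o; try discriminate. unfold sumB, mutp; simpl. ring.
  - destruct x as [|a x], o as [|b o]; try discriminate.
    injection Hx as Hx; injection Ho as Ho.
    assert (Hc : forall c, sumB k (fun y => mutp p (a :: x) (c :: y) * G (hdist (c :: y) (b :: o)))
      = (if Bool.eqb a c then 1 - p else p) *
        mut_expect p x o (fun w u r => G ((if Bool.eqb c b then 0 else 1) + (u + r))%nat)).
    { intro c. rewrite <- (IH x o (fun j => G ((if Bool.eqb c b then 0 else 1) + j)%nat) Hx Ho).
      rewrite !sumB_sumL, <- sumL_scal_l. apply sumL_ext; intros y _.
      rewrite mutp_cons. simpl hdist. ring. }
    rewrite sumB_S, !Hc.
    destruct a, b; simpl; try rewrite (Rplus_comm (p * _));
      f_equal; f_equal; apply mut_expect_ext; intros; f_equal; lia.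
Qed.

Lemma sum_mutp p k x : length x = k -> sumB k (mutp p x) = 1.
Proof.
  intros Hx. rewrite <- (mut_expect_const p x x 1), <- (sum_mutp_hdist p k x x (fun _ => 1)) by auto.
  rewrite !sumB_sumL. apply sumL_ext; intros; ring.
Qed.

Lemma mut_expect_flips_shift p x o c :
  mut_expect p x o (fun w _ _ => c + INR w) = c + p * INR (hdist x o).
Proof.
  revert o c; induction x as [|a x IH]; intros [|b o] c; try (simpl; ring);
    cbn [mut_expect hdist].
  destruct (Bool.eqb a b); cbn [Nat.add].
  - rewrite !IH. ring.
  - rewrite IH, (mut_expect_ext _ _ _ _ (fun w _ _ => (c + 1) + INR w))
      by (intros; rewrite S_INR; ring).
    rewrite IH, S_INR. ring.
Qed.

Lemma mut_expect_flips p x o c :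
  mut_expect p x o (fun w _ _ => c * INR w) = c * (p * INR (hdist x o)).
Proof.
  rewrite (mut_expect_ext _ _ _ _ (fun w u r => c * (0 + INR w) + 0 * 0)) by (intros; ring).
  rewrite mut_expect_lin, mut_expect_flips_shift. ring.
Qed.

Lemma mut_expect_sq_agree_flips p x o c :
  mut_expect p x o (fun _ _ r => (c + INR r) ^ 2)
  = (c + p * INR (agree x o)) ^ 2 + p * (1 - p) * INR (agree x o).
Proof.
  revert o c; induction x as [|a x IH]; intros [|b o] c; try (simpl; ring);
    cbn [mut_expect hdist agree].
  destruct (Bool.eqb a b); cbn [Nat.add].
  - rewrite IH, (mut_expect_ext _ _ _ _ (fun _ _ r => ((c + 1) + INR r) ^ 2))
      by (intros; rewrite S_INR; ring).
    rewrite IH, S_INR. ring.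
  - rewrite !IH. ring.
Qed.

Lemma mut_expect_no_agree_flip p x o (g : nat -> nat -> R) :
  mut_expect p x o (fun w u r => (if (r =? 0)%nat then 1 else 0) * g w u)
  = (1 - p) ^ agree x o * mut_expect p x o (fun w u _ => g w u).
Proof.
  revert o g; induction x as [|a x IH]; intros [|b o] g; try (simpl; ring);
    cbn [mut_expect hdist agree].
  destruct (Bool.eqb a b); cbn [Nat.add].
  - rewrite IH, (mut_expect_ext _ _ _
      (fun w u r => (if (S r =? 0)%nat then 1 else 0) * g w u) (fun _ _ _ => 0))
      by (intros; simpl; ring).
    rewrite mut_expect_const, <- tech_pow_Rmult. ring.
  - rewrite (IH o (fun w u => g w (S u))), (IH o (fun w u => g (S w) u)). ring.
Qed.

(* Moving one flipped differing position to the kept ones changes the weight by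
   the factor [(1 - p) / p]. *)
Lemma mut_expect_shift p x o (h : nat -> nat -> R) : p <> 1 ->
  mut_expect p x o (fun w u _ => INR w * h (w - 1)%nat (S u))
  = p / (1 - p) * mut_expect p x o (fun w u _ => INR u * h w u).
Proof.
  intros Hp1; revert o h; induction x as [|a x IH]; intros [|b o] h; try (simpl; field; lra);
    cbn [mut_expect hdist agree].
  destruct (Bool.eqb a b); cbn [Nat.add].
  - rewrite !IH. field; lra.
  - rewrite (IH o (fun a b => h a (S b))).
    rewrite (mut_expect_ext _ _ _ (fun w u _ => INR (S w) * h (S w - 1)%nat (S u))
      (fun w u _ => 1 * (INR w * h (S (w - 1)) (S u)) + 1 * h w (S u))).
    2:{ intros w u r. rewrite S_INR. destruct w; simpl; [ring|].
        rewrite Nat.sub_0_r. ring. }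
    rewrite mut_expect_lin, (IH o (fun a b => h (S a) b)).
    rewrite (mut_expect_ext _ _ _ (fun w u _ => INR (S u) * h w (S u))
      (fun w u _ => 1 * (INR u * h w (S u)) + 1 * h w (S u))) by (intros; rewrite S_INR; ring).
    rewrite mut_expect_lin. field; lra.
Qed.

(** * Harmonic numbers *)

Fixpoint harm (k : nat) : R := match k with O => 0 | S k' => harm k' + / INR (S k') end.

Lemma harm_mono j k : (j <= k)%nat -> harm j <= harm k.
Proof.
  induction 1; [lra|]. cbn [harm].
  assert (0 < / INR (S m)) by (apply Rinv_0_lt_compat, lt_0_INR; lia). lra.
Qed.

Lemma harm_nonneg k : 0 <= harm k.
Proof. apply (harm_mono 0); lia. Qed.

Lemma harm_sub_le j k : (j <= k)%nat -> harm k - harm j <= INR (k - j) / INR (S j).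
Proof.
  induction 1 as [|m Hjm IH].
  - rewrite Nat.sub_diag. unfold Rdiv. simpl. lra.
  - cbn [harm]. replace (S m - j)%nat with (S (m - j)) by lia. rewrite (S_INR (m - j)).
    assert (/ INR (S m) <= / INR (S j)) by (apply Rinv_le_contravar; [apply lt_0_INR|apply le_INR]; lia).
    unfold Rdiv in *. lra.
Qed.

Lemma ln_le_sub1 x : 0 < x -> ln x <= x - 1.
Proof.
  intros Hx. rewrite <- (exp_ln x) at 2 by exact Hx. pose proof (exp_ineq1_le (ln x)). lra.
Qed.

Lemma ln_succ_le_harm m : ln (INR (S m)) <= harm m.
Proof.
  induction m as [|m IH]; cbn [harm].
  - simpl. rewrite ln_1. lra.
  - assert (Hpos : 0 < INR (S m)) by (apply lt_0_INR; lia).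
    assert (Hq : 0 < INR (S (S m)) / INR (S m)) by (apply Rdiv_lt_0_compat; [apply lt_0_INR; lia|lra]).
    replace (INR (S (S m))) with (INR (S m) * (INR (S (S m)) / INR (S m))) by (field; lra).
    rewrite ln_mult by lra. pose proof (ln_le_sub1 _ Hq).
    replace (INR (S (S m)) / INR (S m) - 1) with (/ INR (S m)) in * by (rewrite (S_INR (S m)); field; lra).
    lra.
Qed.

Lemma harm_min_ge_quadratic n m r : (2 <= n)%nat -> (4 * m <= n)%nat ->
  harm m - 16 * harm m / (INR n * INR n) * (- (INR n / 2) + INR r) ^ 2 <= harm (Nat.min r m).
Proof.
  intros Hn Hm. assert (HnR : 2 <= INR n) by (apply (le_INR 2); auto).
  pose proof (harm_nonneg m). pose proof (harm_nonneg (Nat.min r m)).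
  assert (Hq : 0 <= 16 * harm m / (INR n * INR n))
    by (unfold Rdiv; apply Rmult_le_pos; [lra | left; apply Rinv_0_lt_compat; nra]).
  destruct (le_lt_dec m r) as [Hr|Hr].
  - replace (Nat.min r m) with m by lia. pose proof (pow2_ge_0 (- (INR n / 2) + INR r)). nra.
  - assert (INR (4 * r + n) <= INR (2 * n)) by (apply le_INR; lia).
    rewrite plus_INR, !mult_INR in *. simpl (INR 2) in *. simpl (INR 4) in *.
    assert (Hsq : INR n * INR n <= 16 * (- (INR n / 2) + INR r) ^ 2) by nra.
    apply Rle_trans with 0; [|lra].
    replace (16 * harm m / (INR n * INR n) * (- (INR n / 2) + INR r) ^ 2)
      with (harm m * (16 * (- (INR n / 2) + INR r) ^ 2 / (INR n * INR n))) by (field; lra).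
    assert (1 <= 16 * (- (INR n / 2) + INR r) ^ 2 / (INR n * INR n)).
    { apply Rmult_le_reg_r with (INR n * INR n); [nra|].
      unfold Rdiv. rewrite Rmult_assoc, Rinv_l by nra. lra. }
    nra.
Qed.

(** * Expected loss of the potential in one mutation *)

Definition inv_upto (m b : nat) : R :=
  if ((1 <=? b) && (b <=? m))%nat then / INR b else 0.

Definition upto (m b : nat) : R := if ((1 <=? b) && (b <=? m))%nat then 1 else 0.

Lemma inv_upto_nonneg m b : 0 <= inv_upto m b.
Proof.
  unfold inv_upto. destruct ((1 <=? b) && (b <=? m))%nat eqn:E; [|lra].
  apply andb_prop in E as [E _]. apply Nat.leb_le in E.
  left; apply Rinv_0_lt_compat, lt_0_INR; lia.
Qed.

Lemma INR_mul_inv_upto m b : INR b * inv_upto m b = upto m b.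
Proof.
  unfold inv_upto, upto. destruct ((1 <=? b) && (b <=? m))%nat eqn:E; [|ring].
  apply andb_prop in E as [E _]. apply Nat.leb_le in E.
  apply Rinv_r, not_0_INR; lia.
Qed.

Lemma upto_le1 m b : upto m b <= 1.
Proof. unfold upto. destruct (_ && _)%bool; lra. Qed.

Lemma upto_nonneg m b : 0 <= upto m b.
Proof. unfold upto. destruct (_ && _)%bool; lra. Qed.

(* [k] is the old distance, already capped at [m]. *)
Definition harm_drop (m k j : nat) : R := Rmax 0 (harm k - harm (Nat.min j m)).

(* With [w] differing positions flipped, [u] kept and [r] agreeing ones flipped,
   the new distance is [u + r]; it can only drop below [k <= w + u] when
   [w >= r + 1], and the drop is at most [w / (u + 1)]. *)
Lemma harm_drop_le m w u r :
  harm_drop m (Nat.min (w + u) m) (u + r)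
  <= (if (r =? 0)%nat then 1 else 0) * (INR w * inv_upto m (S u))
     + INR w * (if (1 <=? w - 1)%nat then inv_upto m (S u) else 0).
Proof.
  set (k := Nat.min (w + u) m). set (j := (u + r)%nat).
  pose proof (inv_upto_nonneg m (S u)). pose proof (pos_INR w).
  assert (0 <= INR w * inv_upto m (S u)) by (apply Rmult_le_pos; lra).
  assert (0 <= (if (r =? 0)%nat then 1 else 0) * (INR w * inv_upto m (S u)))
    by (destruct (r =? 0)%nat; lra).
  assert (0 <= INR w * (if (1 <=? w - 1)%nat then inv_upto m (S u) else 0))
    by (destruct (1 <=? w - 1)%nat; lra).
  unfold harm_drop. destruct (le_lt_dec k (Nat.min j m)) as [Hle|Hlt].
  { pose proof (harm_mono _ _ Hle). rewrite Rmax_left; lra. }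
  assert (Hj : Nat.min j m = j) by lia. rewrite Hj in *.
  pose proof (harm_sub_le j k ltac:(lia)) as Hd.
  assert (INR (k - j) / INR (S j) <= INR w / INR (S u)).
  { unfold Rdiv. apply Rmult_le_compat; [apply pos_INR | left; apply Rinv_0_lt_compat, lt_0_INR; lia
      | apply le_INR; lia | apply Rinv_le_contravar; [apply lt_0_INR | apply le_INR]; lia]. }
  assert (Hinv : inv_upto m (S u) = / INR (S u)).
  { unfold inv_upto. replace ((1 <=? S u) && (S u <=? m))%bool with true; [reflexivity|].
    symmetry; apply andb_true_intro; split; apply Nat.leb_le; lia. }
  apply Rmax_lub; [lra|]. destruct r as [|r]; simpl (_ =? 0)%nat.
  - rewrite Hinv in *. unfold Rdiv in *. lra.
  - replace (1 <=? w - 1)%nat with true by (symmetry; apply Nat.leb_le; lia).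
    rewrite Hinv in *. unfold Rdiv in *. lra.
Qed.

Lemma pow_le_anti (a : R) i j : 0 <= a <= 1 -> (i <= j)%nat -> a ^ j <= a ^ i.
Proof.
  intros Ha; induction 1; [lra|]. simpl. pose proof (pow_le a m (proj1 Ha)). nra.
Qed.

Section MutationDrop.

Variables (n m : nat) (x o : list bool).
Hypotheses (n_ge2 : (2 <= n)%nat)
  (x_len : length x = n) (o_len : length o = n).

Let p := / INR n.
Let q := 1 - p.
Let d := hdist x o.

Lemma rate_bounds : 0 < p <= / 2.
Proof.
  assert (2 <= INR n) by (replace 2 with (INR 2) by (simpl; ring); apply le_INR; lia).
  unfold p; split; [apply Rinv_0_lt_compat | apply Rinv_le_contravar]; lra.
Qed.

Lemma agree_eq : agree x o = (n - d)%nat.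
Proof. pose proof (agree_add_hdist x o ltac:(congruence)). unfold d. lia. Qed.

Lemma expect_upto_kept_far : (m < d)%nat ->
  mut_expect p x o (fun _ u _ => upto m u) <= p * INR (m + 1).
Proof.
  intros Hmd. pose proof rate_bounds.
  assert (Hdm : 0 < INR (d - m)) by (apply lt_0_INR; lia).
  apply Rle_trans with (mut_expect p x o (fun w _ _ => / INR (d - m) * INR w)).
  - apply mut_expect_mono; [lra|]. intros w u r Hw. unfold upto.
    destruct ((1 <=? u) && (u <=? m))%nat eqn:E.
    + apply andb_prop in E as [_ E]. apply Nat.leb_le in E.
      apply Rmult_le_reg_l with (INR (d - m)); [lra|].
      rewrite <- Rmult_assoc, Rinv_r, Rmult_1_l, Rmult_1_r by lra. apply le_INR. unfold d in *. lia.
    + apply Rmult_le_pos; [left; apply Rinv_0_lt_compat; lra | apply pos_INR].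
  - rewrite mut_expect_flips. fold d.
    replace (/ INR (d - m) * (p * INR d)) with (p * (INR d / INR (d - m))) by (unfold Rdiv; ring).
    apply Rmult_le_compat_l; [lra|]. apply Rmult_le_reg_r with (INR (d - m)); [lra|].
    unfold Rdiv. rewrite Rmult_assoc, Rinv_l, Rmult_1_r by lra.
    rewrite <- mult_INR. apply le_INR. nia.
Qed.

Lemma expect_upto_kept :
  q ^ (n - d) * mut_expect p x o (fun _ u _ => upto m u) <= q ^ (n - m) + p * INR (m + 1).
Proof.
  pose proof rate_bounds.
  assert (E0 : 0 <= mut_expect p x o (fun _ u _ => upto m u))
    by (apply mut_expect_nonneg; [lra | intros; apply upto_nonneg]).
  assert (Hq : 0 <= q ^ (n - m)) by (apply pow_le; unfold q; lra).
  assert (0 <= p * INR (m + 1)) by (pose proof (pos_INR (m + 1)); nra).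
  destruct (le_lt_dec d m) as [Hdm|Hdm].
  - assert (E1 : mut_expect p x o (fun _ u _ => upto m u) <= 1).
    { rewrite <- (mut_expect_const p x o 1). apply mut_expect_mono; [lra|].
      intros; apply upto_le1. }
    assert (q ^ (n - d) <= q ^ (n - m)) by (apply pow_le_anti; [unfold q; lra | lia]).
    pose proof (pow_le q (n - d)). unfold q in *. nra.
  - pose proof (expect_upto_kept_far Hdm).
    assert (0 <= q ^ (n - d) <= 1)
      by (split; [apply pow_le | rewrite <- (pow1 (n - d)); apply pow_incr]; unfold q; lra).
    nra.
Qed.

Lemma expect_upto_kept_flipped :
  mut_expect p x o (fun w u _ => (if (1 <=? w)%nat then upto m u else 0)) <= p * INR (m + 1).
Proof.
  pose proof rate_bounds.
  destruct (le_lt_dec d m) as [Hdm|Hdm].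
  - apply Rle_trans with (mut_expect p x o (fun w _ _ => 1 * INR w)).
    + apply mut_expect_mono; [lra|]. intros w u r _. rewrite Rmult_1_l.
      destruct (1 <=? w)%nat eqn:E; [|apply pos_INR].
      apply Nat.leb_le in E. pose proof (upto_le1 m u). apply le_INR in E. simpl in E. lra.
    + rewrite mut_expect_flips. fold d. rewrite Rmult_1_l.
      apply Rmult_le_compat_l; [lra|]. apply le_INR; lia.
  - eapply Rle_trans; [|exact (expect_upto_kept_far Hdm)].
    apply mut_expect_mono; [lra|]. intros w u r _.
    pose proof (upto_nonneg m u). destruct (1 <=? w)%nat; lra.
Qed.

Lemma expect_harm_drop_le :
  mut_expect p x o (fun w u r => harm_drop m (Nat.min d m) (u + r))
  <= p / q * (q ^ (n - m) + 2 * INR (m + 1) * p).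
Proof.
  pose proof rate_bounds.
  eapply Rle_trans.
  { apply (mut_expect_mono p x o _
      (fun w u r => 1 * ((if (r =? 0)%nat then 1 else 0) * (INR w * inv_upto m (S u)))
        + 1 * (INR w * (fun a b => if (1 <=? a)%nat then inv_upto m b else 0) (w - 1)%nat (S u)))).
    - lra.
    - intros w u r Hw. rewrite !Rmult_1_l. unfold d; rewrite <- Hw. apply harm_drop_le. }
  rewrite mut_expect_lin, (mut_expect_no_agree_flip p x o (fun w u => INR w * inv_upto m (S u))).
  rewrite (mut_expect_shift p x o (fun _ b => inv_upto m b)),
    (mut_expect_shift p x o (fun a b => if (1 <=? a)%nat then inv_upto m b else 0)) by lra.
  rewrite (mut_expect_ext _ _ _ _ (fun _ u _ => upto m u))
    by (intros; apply INR_mul_inv_upto).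
  rewrite (mut_expect_ext _ _ _ (fun w u _ => INR u * (if (1 <=? w)%nat then inv_upto m u else 0))
     (fun w u _ => if (1 <=? w)%nat then upto m u else 0))
    by (intros w u r; destruct (1 <=? w)%nat; [apply INR_mul_inv_upto | ring]).
  rewrite agree_eq. fold q.
  pose proof expect_upto_kept. pose proof expect_upto_kept_flipped.
  assert (0 < p / q) by (apply Rdiv_lt_0_compat; unfold q; lra).
  rewrite Rmult_1_l, Rmult_1_l.
  replace (q ^ (n - d) * (p / q * mut_expect p x o (fun _ u _ => upto m u)))
    with (p / q * (q ^ (n - d) * mut_expect p x o (fun _ u _ => upto m u))) by ring.
  rewrite plus_INR in *. simpl (INR 1) in *. nra.
Qed.

End MutationDrop.

Definition potential (m : nat) (o y : list bool) : R := harm (Nat.min (hdist y o) m).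

Definition drift_bound (n m : nat) : R :=
  / INR n / (1 - / INR n) * ((1 - / INR n) ^ (n - m) + 2 * INR (m + 1) * / INR n).

(* Elitism: the next state has potential at least the smaller of the potentials
   of the parent and of the offspring. *)
Lemma potential_step_ge n m x o : (2 <= n)%nat -> length x = n -> length o = n ->
  potential m o x - drift_bound n m
  <= sumB n (fun y => mut n x y * Rmin (potential m o x) (potential m o y)).
Proof.
  intros Hn Hx Ho.
  transitivity (sumB n (fun y => mutp (/ INR n) x y *
     (fun j => potential m o x - harm_drop m (Nat.min (hdist x o) m) j) (hdist y o))).
  2:{ right. rewrite !sumB_sumL. apply sumL_ext. intros y _. f_equal.
      unfold potential, harm_drop, Rmin, Rmax. destruct (Rle_dec _ _), (Rle_dec _ _); lra. }
  rewrite (sum_mutp_hdist _ n x o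
    (fun j => potential m o x - harm_drop m (Nat.min (hdist x o) m) j) Hx Ho).
  rewrite (mut_expect_ext _ _ _ _ (fun w u r => 1 * potential m o x
     + (-1) * harm_drop m (Nat.min (hdist x o) m) (u + r))) by (intros; ring).
  rewrite mut_expect_lin, mut_expect_const.
  pose proof (expect_harm_drop_le n m x o Hn Hx Ho). unfold drift_bound. lra.
Qed.

Lemma drift_bound_pos n m : (2 <= n)%nat -> 0 < drift_bound n m.
Proof.
  intros Hn. unfold drift_bound.
  assert (HnR : 2 <= INR n) by (apply (le_INR 2); auto).
  assert (0 < / INR n <= / 2) by (split; [apply Rinv_0_lt_compat | apply Rinv_le_contravar]; lra).
  assert (0 < (1 - / INR n) ^ (n - m)) by (apply pow_lt; lra).
  pose proof (pos_INR (m + 1)).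
  apply Rmult_lt_0_compat; [apply Rdiv_lt_0_compat|]; nra.
Qed.

(** * The (1+1) EA *)

Lemma fmin_le n f z : In z (bits n) -> fmin n f <= f z.
Proof.
  unfold fmin. generalize (f (repeat false n)). induction (bits n) as [|a l IH]; simpl; [tauto|].
  intros i [<-|H]; [apply Rmin_l | eapply Rle_trans; [apply Rmin_r | auto]].
Qed.

Lemma notopt_cases n f y : notopt n f y = 0 \/ notopt n f y = 1.
Proof. unfold notopt. destruct (Req_EM_T _ _); auto. Qed.

Lemma notopt_eq0 n f xs y : In xs (bits n) ->
  (forall z, In z (bits n) -> z <> xs -> f xs < f z) ->
  In y (bits n) -> notopt n f y = 0 -> y = xs.
Proof.
  intros Hxs Hu Hy H. unfold notopt in H. destruct (Req_EM_T _ _) as [E|E]; [|lra].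
  destruct (list_eq_dec Bool.bool_dec y xs) as [|Hne]; auto.
  pose proof (Hu y Hy Hne). pose proof (fmin_le n f xs Hxs). lra.
Qed.

Lemma mut_nonneg n x y : (1 <= n)%nat -> 0 <= mut n x y.
Proof.
  intros Hn. apply mutp_nonneg.
  assert (1 <= INR n) by (apply (le_INR 1); auto).
  split; [left; apply Rinv_0_lt_compat; lra | rewrite <- Rinv_1; apply Rinv_le_contravar; lra].
Qed.

Section EA.

Variables (n : nat) (f : list bool -> R).
Hypothesis n_ge1 : (1 <= n)%nat.

(* the law of x^(t+1) on {T > t}, before the optimum is removed *)
Definition step_mass (t : nat) (y : list bool) : R :=
  sumB n (fun x => qEA n f t x * (if Rle_dec (f y) (f x) then mut n x y else 0))
  + qEA n f t y * sumB n (fun z => if Rle_dec (f z) (f y) then 0 else mut n y z).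

Lemma qEA_S t y : qEA n f (S t) y = notopt n f y * step_mass t y.
Proof. reflexivity. Qed.

Lemma sum_step_mass t (g : list bool -> R) :
  sumB n (fun y => step_mass t y * g y)
  = sumB n (fun x => qEA n f t x *
      sumB n (fun y => mut n x y * (if Rle_dec (f y) (f x) then g y else g x))).
Proof.
  unfold step_mass. rewrite !sumB_sumL. set (B := bits n).
  rewrite (sumL_ext _ _ (fun y =>
     sumL B (fun x => qEA n f t x * (if Rle_dec (f y) (f x) then mut n x y else 0) * g y) +
     qEA n f t y * sumL B (fun z => (if Rle_dec (f z) (f y) then 0 else mut n y z) * g y))).
  2:{ intros y _. rewrite !sumB_sumL. fold B. rewrite !sumL_scal_r. ring. }
  rewrite sumL_add, (sumL_comm B B (fun y x =>
    qEA n f t x * (if Rle_dec (f y) (f x) then mut n x y else 0) * g y)), <- sumL_add.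
  apply sumL_ext. intros x _. rewrite sumB_sumL. fold B.
  rewrite (sumL_ext _ _ (fun y => qEA n f t x * ((if Rle_dec (f y) (f x) then mut n x y else 0) * g y)))
    by (intros; ring).
  rewrite sumL_scal_l, <- Rmult_plus_distr_l, <- sumL_add. f_equal.
  apply sumL_ext. intros y _. destruct (Rle_dec (f y) (f x)); ring.
Qed.

Lemma step_mass_nonneg t y : (forall x, 0 <= qEA n f t x) -> 0 <= step_mass t y.
Proof.
  intros Hq. unfold step_mass. apply Rplus_le_le_0_compat.
  - apply sumL_nonneg. intros x _. apply Rmult_le_pos; auto.
    destruct (Rle_dec _ _); [apply mut_nonneg; auto | lra].
  - apply Rmult_le_pos; auto. apply sumL_nonneg. intros z _.
    destruct (Rle_dec _ _); [lra | apply mut_nonneg; auto].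
Qed.

Lemma qEA_nonneg t y : 0 <= qEA n f t y.
Proof.
  revert y; induction t as [|t IH]; intros y; [simpl | rewrite qEA_S];
    (apply Rmult_le_pos; [destruct (notopt_cases n f y) as [E|E]; rewrite E; lra|]).
  - left. apply Rinv_0_lt_compat, pow_lt. lra.
  - now apply step_mass_nonneg.
Qed.

Lemma tail_nonneg t : 0 <= tailEA n f t.
Proof. apply sumL_nonneg. intros; apply qEA_nonneg. Qed.

Lemma tail_S_le t : tailEA n f (S t) <= tailEA n f t.
Proof.
  unfold tailEA. apply Rle_trans with (sumB n (fun y => step_mass t y * 1)).
  - apply sumL_le. intros y _. rewrite qEA_S.
    pose proof (step_mass_nonneg t y (qEA_nonneg t)).
    destruct (notopt_cases n f y) as [E|E]; rewrite E; lra.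
  - rewrite sum_step_mass. right. apply sumL_ext. intros x Hx.
    transitivity (qEA n f t x * sumB n (mutp (/ INR n) x)).
    + f_equal. apply sumL_ext; intros. destruct (Rle_dec _ _); apply Rmult_1_r.
    + rewrite (sum_mutp _ n x (bits_length _ _ Hx)). ring.
Qed.

Section Potential.

Variables (m : nat) (xs : list bool).
Hypotheses (xs_bits : In xs (bits n))
  (xs_min : forall z, In z (bits n) -> z <> xs -> f xs < f z).

(* E[potential of x^(t); T > t] *)
Definition pot_mass (t : nat) : R := sumB n (fun y => qEA n f t y * potential m xs y).

Lemma notopt_potential y : In y (bits n) -> notopt n f y * potential m xs y = potential m xs y.
Proof.
  intros Hy. destruct (notopt_cases n f y) as [E|E]; rewrite E; [|ring].
  rewrite (notopt_eq0 n f xs y xs_bits xs_min Hy E). unfold potential. rewrite hdist_refl. simpl. ring.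
Qed.

Lemma pot_mass_drift t : (2 <= n)%nat ->
  pot_mass t - drift_bound n m * tailEA n f t <= pot_mass (S t).
Proof.
  intros Hn. unfold pot_mass, tailEA.
  transitivity (sumB n (fun y => step_mass t y * potential m xs y)).
  2:{ right. apply sumL_ext. intros y Hy. rewrite qEA_S, <- (notopt_potential y Hy) at 1. ring. }
  rewrite sum_step_mass, !sumB_sumL.
  apply Rle_trans with (sumL (bits n) (fun x => qEA n f t x * (potential m xs x - drift_bound n m))).
  { right. rewrite (sumL_ext _ (fun x => qEA n f t x * (potential m xs x - drift_bound n m)) (fun x =>
      qEA n f t x * potential m xs x + - drift_bound n m * qEA n f t x)) by (intros; ring).
    rewrite sumL_add, sumL_scal_l. ring. }
  apply sumL_le. intros x Hx. apply Rmult_le_compat_l; [apply qEA_nonneg|].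
  eapply Rle_trans; [apply potential_step_ge; eauto using bits_length|].
  apply sumL_le. intros y _. apply Rmult_le_compat_l; [apply mut_nonneg; auto|].
  destruct (Rle_dec _ _); [apply Rmin_r | apply Rmin_l].
Qed.

Lemma pot_mass_le t : pot_mass t <= harm m * tailEA n f t.
Proof.
  unfold pot_mass, tailEA. rewrite !sumB_sumL, <- sumL_scal_l. apply sumL_le. intros y _.
  pose proof (qEA_nonneg t y). assert (potential m xs y <= harm m) by (apply harm_mono; lia).
  nra.
Qed.

Lemma pot_mass_sum N : (2 <= n)%nat ->
  pot_mass 0 <= drift_bound n m * sum_f_R0 (tailEA n f) N + pot_mass (S N).
Proof.
  intros Hn. induction N as [|N IH]; simpl;
    [pose proof (pot_mass_drift 0 Hn) | pose proof (pot_mass_drift (S N) Hn)]; lra.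
Qed.

(* The initial distance to [xs] is Binomial(n, 1/2); its variance [n/4] makes
   [P(dist < n/4) <= 4/n] (Chebyshev), and [m <= n/4]. *)
Lemma pot_mass_init : (2 <= n)%nat -> (4 * m <= n)%nat ->
  harm m * (1 - 4 / INR n) <= pot_mass 0.
Proof.
  intros Hn Hm. pose proof (bits_length _ _ xs_bits) as Hlx.
  assert (HnR : 2 <= INR n) by (apply (le_INR 2); auto).
  unfold pot_mass. simpl qEA.
  transitivity (sumB n (fun y => mutp (/ 2) xs y * (fun j => harm (Nat.min j m)) (hdist y xs))).
  2:{ right. apply sumL_ext. intros y Hy.
      rewrite mutp_half by (rewrite (bits_length _ _ Hy); auto). rewrite Hlx, pow_inv.
      replace (notopt n f y / 2 ^ n * potential m xs y)
        with (notopt n f y * potential m xs y / 2 ^ n) by (unfold Rdiv; ring).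
      rewrite notopt_potential by exact Hy. unfold potential. field. apply pow_nonzero. lra. }
  rewrite (sum_mutp_hdist _ n xs xs (fun j => harm (Nat.min j m)) Hlx Hlx).
  transitivity (mut_expect (/ 2) xs xs (fun _ _ r =>
    harm m * 1 + (- 16 * harm m / (INR n * INR n)) * ((- (INR n / 2)) + INR r) ^ 2)).
  - rewrite mut_expect_lin, mut_expect_const, mut_expect_sq_agree_flips.
    pose proof (agree_add_hdist xs xs eq_refl) as Ha. rewrite hdist_refl, Hlx in Ha.
    rewrite Nat.add_0_r in Ha. rewrite Ha. right. field. lra.
  - apply mut_expect_mono; [lra|]. intros w u r Hw. rewrite hdist_refl in Hw.
    replace u with 0%nat by lia. simpl Nat.add.
    pose proof (harm_min_ge_quadratic n m r Hn Hm). unfold Rdiv in *. lra.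
Qed.

End Potential.
End EA.

Lemma sum_f_R0_ge_const (a : nat -> R) c N :
  (forall i, (i <= N)%nat -> c <= a i) -> INR (S N) * c <= sum_f_R0 a N.
Proof.
  induction N as [|N IH]; intros H; cbn [sum_f_R0].
  - specialize (H 0%nat (le_n 0)). simpl. lra.
  - assert (c <= a (S N)) by (apply H; lia).
    assert (INR (S N) * c <= sum_f_R0 a N) by (apply IH; intros; apply H; lia).
    rewrite !S_INR in *. lra.
Qed.

(* Otherwise [a (N + 1) <= r / (N + 2)] for all [N], and letting [N] grow
   forces [A <= dl * r]. *)
Lemma partial_sums_exceed (a : nat -> R) (A dl H : R) :
  0 < dl -> 0 <= H -> (forall i, 0 <= a i) -> (forall i, a (S i) <= a i) ->
  (forall N, A <= dl * sum_f_R0 a N + H * a (S N)) ->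
  forall r, r < A / dl -> exists N, r < sum_f_R0 a N.
Proof.
  intros Hdl HH Hpos Hdec HA r Hr.
  assert (Hanti : forall i j, (i <= j)%nat -> a j <= a i).
  { intros i j Hij. induction Hij as [|j Hij IH]; [lra|]. specialize (Hdec j). lra. }
  destruct (Rlt_le_dec r 0) as [Hr0|Hr0].
  { exists 0%nat. simpl. specialize (Hpos 0%nat). lra. }
  assert (Hgap : 0 < A - dl * r).
  { apply (Rmult_lt_compat_r dl) in Hr; [|exact Hdl].
    unfold Rdiv in Hr. rewrite Rmult_assoc, Rinv_l, Rmult_1_r in Hr by lra. lra. }
  destruct (archimed_cor1 ((A - dl * r) / (H * r + 1))) as [N0 [HN0 HN0pos]].
  { apply Rdiv_lt_0_compat; nra. }
  exists N0. destruct (Rlt_le_dec r (sum_f_R0 a N0)) as [|Hsum]; [assumption|exfalso].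
  assert (HN0R : 0 < INR N0) by (apply lt_0_INR; lia).
  assert (Htail : INR (S N0) * a (S N0) <= r).
  { eapply Rle_trans; [|exact Hsum]. apply sum_f_R0_ge_const. intros i Hi. apply Hanti. lia. }
  rewrite S_INR in Htail.
  specialize (HA N0).
  assert (Hk : (H * r + 1) * / INR N0 < A - dl * r).
  { replace (A - dl * r) with ((H * r + 1) * ((A - dl * r) / (H * r + 1))) by (field; nra).
    apply Rmult_lt_compat_l; nra. }
  assert (Ha : H * a (S N0) <= (H * r + 1) * / INR N0).
  { apply Rmult_le_reg_r with (INR N0); [lra|].
    rewrite (Rmult_assoc (H * r + 1)), Rinv_l, Rmult_1_r by lra. pose proof (Hpos (S N0)). nra. }
  assert (dl * sum_f_R0 a N0 <= dl * r) by (apply Rmult_le_compat_l; lra).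
  lra.
Qed.

Lemma expected_time_ge_harm n f m : (2 <= n)%nat -> (4 * m <= n)%nat ->
  unique_min n f ->
  expected_time_ge n f (harm m * (1 - 4 / INR n) / drift_bound n m).
Proof.
  intros Hn H4 [xs [Hxs Hu]]. assert (Hn1 : (1 <= n)%nat) by lia.
  intros r Hr.
  apply (partial_sums_exceed (tailEA n f) (harm m * (1 - 4 / INR n)) (drift_bound n m) (harm m));
    [| | | | | exact Hr].
  - now apply drift_bound_pos.
  - apply harm_nonneg.
  - intros; now apply tail_nonneg.
  - intros; now apply tail_S_le.
  - intros N. pose proof (pot_mass_init n f Hn1 m xs Hxs Hu Hn H4).
    pose proof (pot_mass_sum n f Hn1 m xs Hxs Hu N Hn).
    pose proof (pot_mass_le n f Hn1 m xs (S N)). lra.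
Qed.

(** * Asymptotics *)

Lemma exp_le_inv_one_sub y : 0 <= y < 1 -> exp y <= / (1 - y).
Proof.
  intros Hy. pose proof (exp_ineq1_le (- y)) as H. rewrite exp_Ropp in H.
  pose proof (exp_pos y). apply Rmult_le_reg_r with ((1 - y) * / exp y).
  - apply Rmult_lt_0_compat; [lra | now apply Rinv_0_lt_compat].
  - replace (exp y * ((1 - y) * / exp y)) with (1 - y) by (field; lra).
    replace (/ (1 - y) * ((1 - y) * / exp y)) with (/ exp y) by (field; lra). lra.
Qed.

Lemma ln_le_2sqrt x : 0 < x -> ln x <= 2 * sqrt x.
Proof.
  intros Hx. pose proof (sqrt_lt_R0 x Hx) as Hs.
  rewrite <- (sqrt_sqrt x) at 1 by lra. rewrite ln_mult by lra.
  pose proof (ln_le_sub1 _ Hs). lra.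
Qed.

Lemma exp_pow_INR x j : exp x ^ j = exp (INR j * x).
Proof.
  induction j as [|j IH]; [simpl; rewrite Rmult_0_l, exp_0; reflexivity|].
  rewrite <- tech_pow_Rmult, IH, <- exp_plus, S_INR. f_equal. ring.
Qed.

(* With [p = 1/n], the first summand of the drift bound is
   [(1 - p)^(n - m) <= e^(-1) e^(m/n)] and [m/n <= 1/k]. *)
Lemma e_n_drift_bound_le n m k : (2 <= n)%nat -> (m <= n)%nat -> 2 <= k -> INR m * k <= INR n ->
  exp 1 * INR n * drift_bound n m
  <= INR n / (INR n - 1) * (k / (k - 1) + 8 * (INR m + 1) / INR n).
Proof.
  intros Hn Hmn Hk HmN.
  assert (HN : 2 <= INR n) by (apply (le_INR 2); auto).
  unfold drift_bound. rewrite plus_INR. simpl (INR 1).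
  pose proof (pos_INR m). set (N := INR n) in *. set (M := INR m) in *.
  assert (Hpow : (1 - / N) ^ (n - m) <= exp (-1) * exp (M / N)).
  { rewrite <- exp_plus. apply Rle_trans with (exp (- / N) ^ (n - m)).
    - apply pow_incr. pose proof (exp_ineq1_le (- / N)).
      assert (/ N <= / 2) by (apply Rinv_le_contravar; lra). lra.
    - rewrite exp_pow_INR, minus_INR by exact Hmn. right. f_equal. fold N M. field. lra. }
  assert (HMN : M / N <= / k).
  { apply Rmult_le_reg_r with (N * k); [nra|]. unfold Rdiv.
    replace (M * / N * (N * k)) with (M * k) by (field; lra).
    replace (/ k * (N * k)) with N by (field; lra). lra. }
  assert (HMN0 : 0 <= M / N) by (apply Rmult_le_pos; [lra | left; apply Rinv_0_lt_compat; lra]).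
  assert (/ k <= / 2) by (apply Rinv_le_contravar; lra).
  assert (Hexp : exp 1 * (1 - / N) ^ (n - m) <= k / (k - 1)).
  { apply Rle_trans with (exp (M / N)).
    - replace (exp (M / N)) with (exp 1 * (exp (-1) * exp (M / N))).
      + apply Rmult_le_compat_l; [left; apply exp_pos | exact Hpow].
      + rewrite <- Rmult_assoc, <- exp_plus. replace (1 + -1) with 0 by ring. rewrite exp_0. ring.
    - apply Rle_trans with (/ (1 - / k)).
      + eapply Rle_trans; [apply exp_le_inv_one_sub; lra|].
        apply Rinv_le_contravar; lra.
      + right. field. lra. }
  assert (Hlin : exp 1 * (2 * (M + 1) * / N) <= 8 * (M + 1) / N).
  { pose proof exp_le_3. assert (0 <= (M + 1) * / N) by (apply Rmult_le_pos; [lra | left; apply Rinv_0_lt_compat; lra]).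
    unfold Rdiv. nra. }
  replace (exp 1 * N * (/ N / (1 - / N) * ((1 - / N) ^ (n - m) + 2 * (M + 1) * / N)))
    with (N / (N - 1) * (exp 1 * (1 - / N) ^ (n - m) + exp 1 * (2 * (M + 1) * / N)))
    by (field; lra).
  apply Rmult_le_compat_l; [apply Rlt_le, Rdiv_lt_0_compat; lra | lra].
Qed.

Definition blocks (n : nat) : nat := S (Nat.log2 n).

Definition eps_n (n : nat) : R := 100 / sqrt (INR (blocks n)).

Lemma blocks_le n : (1 <= n)%nat -> (blocks n <= n)%nat.
Proof.
  intros Hn. destruct (Nat.log2_spec n ltac:(lia)) as [H _].
  pose proof (Nat.pow_gt_lin_r 2 (Nat.log2 n) ltac:(lia)). unfold blocks. lia.
Qed.

Lemma blocks_le_4ln n : (2 <= n)%nat -> INR (blocks n) <= 4 * ln (INR n).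
Proof.
  intros Hn. destruct (Nat.log2_spec n ltac:(lia)) as [H _].
  assert (HL : (1 <= Nat.log2 n)%nat) by (apply Nat.log2_pos; lia).
  apply le_INR in H, HL. rewrite pow_INR in H. replace (INR 2) with 2 in H by (simpl; ring).
  simpl (INR 1) in HL.
  assert (ln (2 ^ Nat.log2 n) <= ln (INR n)).
  { destruct H as [Hlt|Heq]; [left; apply ln_increasing; [apply pow_lt|]; lra | rewrite Heq; lra]. }
  rewrite ln_pow in * by lra. pose proof ln_lt_2. unfold blocks. rewrite S_INR. nra.
Qed.

Lemma harm_div_ge n K : (1 <= n)%nat -> (1 <= K)%nat ->
  ln (INR n) - ln (INR K) <= harm (n / K).
Proof.
  intros Hn HK. eapply Rle_trans; [|apply ln_succ_le_harm].
  assert (HKR : 0 < INR K) by (apply lt_0_INR; lia).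
  assert (HnR : 0 < INR n) by (apply lt_0_INR; lia).
  assert (HnK : INR n < INR K * INR (S (n / K))).
  { rewrite <- mult_INR. apply lt_INR. pose proof (Nat.div_mod n K ltac:(lia)).
    pose proof (Nat.mod_upper_bound n K ltac:(lia)). lia. }
  replace (ln (INR n) - ln (INR K)) with (ln (INR n / INR K))
    by (unfold Rdiv; rewrite ln_mult, ln_Rinv by (try apply Rinv_0_lt_compat; lra); ring).
  left. apply ln_increasing; [apply Rdiv_lt_0_compat; lra|].
  apply Rmult_lt_reg_r with (INR K); [lra|]. unfold Rdiv.
  rewrite Rmult_assoc, Rinv_l by lra. lra.
Qed.

Lemma harm_block_ge n : (2 <= n)%nat ->
  ln (INR n) * (1 - 8 / sqrt (INR (blocks n))) <= harm (n / blocks n).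
Proof.
  intros Hn.
  pose proof (harm_div_ge n (blocks n) ltac:(lia) ltac:(unfold blocks; lia)).
  pose proof (blocks_le_4ln n Hn).
  set (k := INR (blocks n)) in *.
  assert (Hk : 1 <= k) by (apply (le_INR 1); unfold blocks; lia).
  pose proof (sqrt_lt_R0 k ltac:(lra)) as Hs. pose proof (sqrt_sqrt k ltac:(lra)) as Hss.
  pose proof (ln_le_2sqrt k ltac:(lra)).
  set (s := sqrt k) in *.
  assert (2 * s <= ln (INR n) * (8 / s)); [|lra].
  replace (ln (INR n) * (8 / s)) with (2 * s * (4 * ln (INR n) / k))
    by (rewrite <- Hss; field; lra).
  assert (1 <= 4 * ln (INR n) / k).
  { apply Rmult_le_reg_r with k; [lra|]. unfold Rdiv. rewrite Rmult_assoc, Rinv_l; lra. }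
  nra.
Qed.

Lemma blocks_large n : eps_n n < 1 -> 10000 < INR (blocks n).
Proof.
  unfold eps_n. set (k := INR (blocks n)). intros He.
  assert (Hk : 0 < k) by (apply lt_0_INR; unfold blocks; lia).
  pose proof (sqrt_lt_R0 k Hk). pose proof (sqrt_sqrt k ltac:(lra)).
  assert (100 < sqrt k); [|nra].
  apply Rmult_lt_reg_r with (/ sqrt k); [now apply Rinv_0_lt_compat|].
  rewrite Rinv_r by lra. exact He.
Qed.

Lemma div_pred_le x k : 2 <= k <= x -> x / (x - 1) <= 1 + 2 / k.
Proof.
  intros Hk. apply Rmult_le_reg_r with ((x - 1) * k); [nra|].
  replace (x / (x - 1) * ((x - 1) * k)) with (x * k) by (field; lra).
  replace ((1 + 2 / k) * ((x - 1) * k)) with ((x - 1) * k + 2 * (x - 1)) by (field; lra).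
  nra.
Qed.

Lemma e_n_drift_block_le n : (1 <= n)%nat -> eps_n n < 1 ->
  exp 1 * INR n * drift_bound n (n / blocks n) <= 1 + 21 / sqrt (INR (blocks n)).
Proof.
  intros Hn He. pose proof (blocks_large n He) as Hk. pose proof (blocks_le n Hn) as HKn.
  set (K := blocks n) in *. set (k := INR K) in *. set (m := (n / K)%nat).
  assert (HKm : (K * m <= n)%nat) by apply Nat.Div0.mul_div_le.
  assert (HmN : (m <= n)%nat) by (unfold K, blocks in HKm; nia).
  assert (HkN : k <= INR n) by (apply le_INR; auto).
  assert (HMk : INR m * k <= INR n) by (unfold k; rewrite <- mult_INR, Nat.mul_comm; apply le_INR; auto).
  pose proof (pos_INR m).
  eapply Rle_trans.
  { apply (e_n_drift_bound_le n m k); [| exact HmN | lra | exact HMk].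
    apply (INR_le 2). replace (INR 2) with 2 by (simpl; ring). lra. }
  set (N := INR n) in *. set (M := INR m) in *.
  pose proof (div_pred_le N k ltac:(lra)). pose proof (div_pred_le k k ltac:(lra)).
  assert (H8 : 8 * (M + 1) / N <= 16 / k).
  { apply Rmult_le_reg_r with (N * k); [nra|].
    replace (8 * (M + 1) / N * (N * k)) with (8 * (M * k + k)) by (field; lra).
    replace (16 / k * (N * k)) with (16 * N) by (field; lra). lra. }
  assert (0 <= 8 * (M + 1) / N) by (apply Rmult_le_pos; [lra | left; apply Rinv_0_lt_compat; lra]).
  apply Rle_trans with ((1 + 2 / k) * (1 + 18 / k)).
  { apply Rmult_le_compat; [apply Rlt_le, Rdiv_lt_0_compat | apply Rplus_le_le_0_compat | | ];
      try lra; apply Rlt_le, Rdiv_lt_0_compat; lra. }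
  pose proof (sqrt_lt_R0 k ltac:(lra)). pose proof (sqrt_sqrt k ltac:(lra)).
  set (v := / sqrt k).
  assert (Hv : / k = v * v) by (unfold v; rewrite <- Rinv_mult; congruence).
  assert (Hv0 : 0 < v) by (apply Rinv_0_lt_compat; lra).
  assert (v * 100 < 1).
  { apply Rmult_lt_reg_r with (sqrt k); [lra|]. unfold v.
    rewrite Rmult_comm, <- Rmult_assoc, Rinv_r by lra. nra. }
  unfold Rdiv. rewrite Hv. fold v.
  assert (v * v <= v / 100) by nra. assert (v * v * (v * v) <= v * v) by nra. nra.
Qed.

Lemma block_len_bounds n : (1 <= n)%nat -> eps_n n < 1 ->
  (2 <= n)%nat /\ (4 * (n / blocks n) <= n)%nat.
Proof.
  intros Hn He. pose proof (blocks_large n He) as Hk. pose proof (blocks_le n Hn).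
  assert (HK : (4 <= blocks n)%nat) by (apply INR_le; replace (INR 4) with 4 by (simpl; ring); lra).
  pose proof (Nat.div_mod n (blocks n) ltac:(lia)).
  pose proof (Nat.mod_upper_bound n (blocks n) ltac:(lia)).
  split; nia.
Qed.

Lemma main_bound n : (1 <= n)%nat -> eps_n n < 1 ->
  (1 - eps_n n) * exp 1 * INR n * ln (INR n)
  <= harm (n / blocks n) * (1 - 4 / INR n) / drift_bound n (n / blocks n).
Proof.
  intros Hn He. destruct (block_len_bounds n Hn He) as [Hn2 _].
  pose proof (harm_block_ge n Hn2) as H1. pose proof (e_n_drift_block_le n Hn He) as H2.
  pose proof (drift_bound_pos n (n / blocks n) Hn2) as Hd.
  pose proof (blocks_large n He) as Hk. pose proof (blocks_le n Hn) as HKn.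
  pose proof (blocks_le_4ln n Hn2) as Hln. unfold eps_n in *.
  set (m := (n / blocks n)%nat) in *. set (k := INR (blocks n)) in *.
  assert (HkN : k <= INR n) by (apply le_INR; auto).
  pose proof (sqrt_lt_R0 k ltac:(lra)). pose proof (sqrt_sqrt k ltac:(lra)).
  set (s := sqrt k) in *. set (t := / s).
  assert (Ht : 0 < t) by (apply Rinv_0_lt_compat; lra).
  assert (Hdiv : forall c, c / s = c * t) by reflexivity. rewrite !Hdiv in *.
  assert (Ht100 : t * 100 < 1) by lra.
  assert (H4N : 1 - 4 * t <= 1 - 4 / INR n).
  { assert (/ INR n <= t * t).
    { replace (t * t) with (/ k) by (unfold t; rewrite <- Rinv_mult; congruence).
      apply Rinv_le_contravar; lra. }
    unfold Rdiv. nra. }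
  apply Rmult_le_reg_r with (drift_bound n m); [exact Hd|].
  replace (harm m * (1 - 4 / INR n) / drift_bound n m * drift_bound n m)
    with (harm m * (1 - 4 / INR n)) by (field; lra).
  apply Rle_trans with ((1 - 100 * t) * ln (INR n) * (1 + 21 * t)).
  { replace ((1 - 100 * t) * exp 1 * INR n * ln (INR n) * drift_bound n m)
      with ((1 - 100 * t) * ln (INR n) * (exp 1 * INR n * drift_bound n m)) by ring.
    apply Rmult_le_compat_l; [nra | lra]. }
  apply Rle_trans with (ln (INR n) * (1 - 8 * t) * (1 - 4 * t)); [nra|].
  apply Rmult_le_compat; nra.
Qed.

Lemma eps_n_cv : Un_cv eps_n 0.
Proof.
  intros e He. set (y := 100 / e).
  assert (Hy : 0 < y) by (apply Rdiv_lt_0_compat; lra).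
  destruct (archimed_cor1 (/ (y * y + 1))) as [M [HM HM0]]; [apply Rinv_0_lt_compat; nra|].
  assert (HMR : 0 < INR M) by (apply lt_0_INR; lia).
  assert (HyM : y * y + 1 < INR M).
  { rewrite <- (Rinv_inv (INR M)). rewrite <- (Rinv_inv (y * y + 1)) at 1.
    apply Rinv_lt_contravar; [apply Rmult_lt_0_compat; apply Rinv_0_lt_compat; nra | exact HM]. }
  exists (2 ^ M)%nat. intros n Hn. unfold R_dist, eps_n, blocks. rewrite Rminus_0_r.
  assert (HL : (M <= Nat.log2 n)%nat).
  { rewrite <- (Nat.log2_pow2 M) by lia. apply Nat.log2_le_mono. lia. }
  assert (Hsq : y < sqrt (INR (S (Nat.log2 n)))).
  { rewrite <- (sqrt_square y) by lra. apply sqrt_lt_1_alt.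
    split; [nra|]. apply Rlt_le_trans with (INR M); [lra | apply le_INR; lia]. }
  assert (0 < 100 / sqrt (INR (S (Nat.log2 n)))) by (apply Rdiv_lt_0_compat; lra).
  rewrite Rabs_right by lra.
  apply Rmult_lt_reg_r with (sqrt (INR (S (Nat.log2 n)))); [lra|].
  unfold Rdiv. rewrite Rmult_assoc, Rinv_l by lra.
  unfold y in Hsq. apply Rmult_lt_compat_l with (r := e) in Hsq; auto.
  replace (e * (100 / e)) with 100 in Hsq by (field; lra). lra.
Qed.

Lemma expected_time_ge_mono n f b b' :
  b' <= b -> expected_time_ge n f b -> expected_time_ge n f b'.
Proof. intros Hb H r Hr. apply H. lra. Qed.

Lemma expected_time_ge_nonpos n f b : (1 <= n)%nat -> b <= 0 -> expected_time_ge n f b.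
Proof. intros Hn Hb r Hr. exists 0%nat. simpl. pose proof (tail_nonneg n f Hn 0). lra. Qed.

Lemma e_n_ln_nonneg n : (1 <= n)%nat -> 0 <= exp 1 * INR n * ln (INR n).
Proof.
  intros Hn. apply Rmult_le_pos; [apply Rmult_le_pos; [apply Rlt_le, exp_pos | apply pos_INR]|].
  destruct (le_INR 1 n Hn) as [Hlt|Heq]; simpl in *.
  - rewrite <- ln_1. left. apply ln_increasing; lra.
  - rewrite <- Heq, ln_1. lra.
Qed.

Theorem corollary7 :
  exists eps : nat -> R, Un_cv eps 0 /\
    forall (n : nat) (f : list bool -> R),
      (1 <= n)%nat -> unique_min n f ->
      expected_time_ge n f ((1 - eps n) * exp 1 * INR n * ln (INR n)).
Proof.
  exists eps_n. split; [exact eps_n_cv|]. intros n f Hn Hu.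
  destruct (Rlt_le_dec (eps_n n) 1) as [He|He].
  - destruct (block_len_bounds n Hn He) as [Hn2 Hm4].
    apply (expected_time_ge_mono _ _ _ _ (main_bound n Hn He)).
    now apply expected_time_ge_harm.
  - apply expected_time_ge_nonpos; [exact Hn|].
    pose proof (e_n_ln_nonneg n Hn). nra.
Qed.
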